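(* Let $(P,r,\gamma)$ be a discounted MDP with finite $\mathcal{S},\mathcal{A}$, $r:\mathcal{S}\times\mathcal{A}\to[0,1]$, $\gamma\in(0,1)$, and let $M>0$, $\varepsilon>0$. Define $\mathcal{L}=\mathrm{Clip}_M\circ\mathcal{T}_\gamma$ and run the Span-Constrained Planning algorithm: $V^0=\mathbf 0$, $T=\big\lceil \log(\frac{3}{(1-\gamma)^2\varepsilon})/(1-\gamma)\big\rceil$, $V^{t+1}=\mathcal{L}(V^t)$ for $t=0,\dots,T-1$; choose $\widehat\pi(s)\in\arg\max_a r(s,a)+\gamma P_{sa}V^T$; set $m=\min_sV^T(s)$ and $\tilde r(s,a)=\min\{m+M-\gamma P_{sa}V^T,\ r(s,a)\}$; return $\widehat\pi,V^T,\tilde r$. Then $\mathcal{L}$ is a $\gamma$-contraction in $\|\cdot\|_\infty$ with a unique fixed point $V^\star_{\gamma,M}$, and: 1. $\|V^T-V^\star_{\gamma,M}\|_\infty\le\varepsilon$; 2. $\tilde r\le r$, $\|V^{\widehat\pi}_{\gamma,\tilde r}-V^\star_{\gamma,M}\|_\infty\le\varepsilon$, and $\|V^{\widehat\pi}_{\gamma,\tilde r}\|_{\mathrm{sp}}\le M+2\varepsilon$; 3. for any policy $\pi'$ and reward function $r'\le r$ with $\|V^{\pi'}_{\gamma,r'}\|_{\mathrm{sp}}\le M$, we have $V^\star_{\gamma,M}\ge V^{\pi'}_{\gamma,r'}$ and $V^{\widehat\pi}_\gamma\ge V^{\widehat\pi}_{\gamma,\tilde r}\ge V^\star_{\gamma,M}-\varepsilon\mathbf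 1\ge V^{\pi'}_{\gamma,r'}-\varepsilon\mathbf 1$.
   Context: $\mathcal{T}_\gamma(V)(s)=\max_a\big(r(s,a)+\gamma\sum_{s'}P(s'\mid s,a)V(s')\big)$; $P_{sa}V=\sum_{s'}P(s'\mid s,a)V(s')$. $\mathrm{Clip}_M(V)=\min\{V,(M+\min_{s'}V(s'))\mathbf 1\}$ (elementwise minimum). $V^\pi_{\gamma,r'}(s)=\mathbb{E}^\pi_s[\sum_{t\ge0}\gamma^tr'(S_t,A_t)]$ is the value of $\pi$ in the DMDP $(P,r',\gamma)$ and $V^\pi_\gamma=V^\pi_{\gamma,r}$. $\|x\|_{\mathrm{sp}}=\max_sx(s)-\min_sx(s)$. Inequalities between vectors/functions are elementwise. *)

From HB Require Import structures.
From mathcomp Require Import all_boot all_order all_algebra.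
From mathcomp Require Import all_classical all_reals all_analysis.
Set Implicit Arguments. Unset Strict Implicit. Unset Printing Implicit Defensive.
Import Order.TTheory GRing.Theory Num.Theory.
Local Open Scope ring_scope.

Section MDP.
Variables (R : realType) (S A : finType).

(* max / min over a finite type (0 if the type is empty) *)
Definition fmax (T : finType) (f : T -> R) : R :=
  if [pick t : T] is Some t0 then \big[Num.max/f t0]_(t : T) f t else 0.
Definition fmin (T : finType) (f : T -> R) : R :=
  if [pick t : T] is Some t0 then \big[Num.min/f t0]_(t : T) f t else 0.

(* P_{sa} V = sum_{s'} P(s'|s,a) V(s') ; P s a s' = P(s' | s, a) *)
Definition PV (P : S -> A -> S -> R) (V : S -> R) (s : S) (a : A) : R :=
  \sum_(s' : S) P s a s' * V s'.

Definition bellman (P : S -> A -> S -> R) (r : S -> A -> R) (gamma : R)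
  (V : S -> R) : S -> R :=
  fun s => fmax (fun a => r s a + gamma * PV P V s a).

Definition clip (M : R) (V : S -> R) : S -> R :=
  fun s => Num.min (V s) (M + fmin V).

Definition Lop P r gamma M (V : S -> R) : S -> R := clip M (bellman P r gamma V).

Definition supnorm (V : S -> R) : R := fmax (fun s => `|V s|).
Definition spnorm (V : S -> R) : R := fmax V - fmin V.

(* stationary (possibly randomized) policy: pi s a = probability of a in s *)
Definition is_policy (pi : S -> A -> R) : Prop :=
  (forall s a, 0 <= pi s a) /\ (forall s, \sum_(a : A) pi s a = 1).
Definition det_policy (pi : S -> A) : S -> A -> R :=
  fun s a => (a == pi s)%:R.

Definition Ppi P (pi : S -> A -> R) (f : S -> R) : S -> R :=
  fun s => \sum_(a : A) pi s a * PV P f s a.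
Definition rpi (pi : S -> A -> R) (r' : S -> A -> R) : S -> R :=
  fun s => \sum_(a : A) pi s a * r' s a.

(* V^pi_{gamma,r'}(s) = E^pi_s [ sum_t gamma^t r'(S_t,A_t) ]
   = lim_n sum_{t<n} gamma^t (P_pi^t r_pi)(s) *)
Definition value P (pi : S -> A -> R) (gamma : R) (r' : S -> A -> R) : S -> R :=
  fun s => limn (fun n : nat =>
    \sum_(t < n) gamma ^+ t * iter t (Ppi P pi) (rpi pi r') s).

Definition niter (gamma eps : R) : nat :=
  let c := Num.ceil (ln (3 / ((1 - gamma) ^+ 2 * eps)) / (1 - gamma)) in
  if (0 <= c)%R then `|c|%N else 0%N.

Definition VT P r gamma M eps : S -> R :=
  iter (niter gamma eps) (Lop P r gamma M) (fun _ => 0).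

End MDP.

(* Value iteration from 0 is nondecreasing and bounded, so it converges
   upwards to a fixed point vstar of L = Clip_M o T_gamma, within
   gamma^n/(1-gamma) after n steps; a value function whose span is at most M
   and whose reward is dominated by r is a subsolution of L, hence below vstar.
   For V = L^T 0, the clipped reward makes one Bellman step of the greedy
   policy reproduce L V up to gamma^T/(1-gamma), so the value of that policy
   is within gamma^T/(1-gamma)^2 of V, and the choice of T makes all these
   errors at most eps. *)

From HB Require Import structures.
From mathcomp Require Import all_boot all_order all_algebra.
From mathcomp Require Import all_classical all_reals all_analysis.
From mathcomp Require Import ring lra.
Import Order.TTheory GRing.Theory Num.Theory numFieldNormedType.Exports.
Set Implicit Arguments. Unset Strict Implicit. Unset Printing Implicit Defensive.
Local Open Scope classical_set_scope.
Local Open Scope ring_scope.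

Section FiniteExtrema.
Variables (R : realType) (T : finType).
Implicit Types (f g : T -> R) (c : R).

Lemma le_fmax f t : f t <= fmax f.
Proof. by rewrite /fmax; case: pickP => [t0 _|/(_ t)//]; apply: le_bigmax. Qed.

Lemma fmax_le f c :
  (forall t, f t <= c) -> ((T -> False) -> 0 <= c) -> fmax f <= c.
Proof.
move=> fc c0; rewrite /fmax; case: pickP => [t0 _|T0]; last by apply: c0 => t; have := T0 t.
exact: bigmax_le.
Qed.

Lemma fmin_le f t : fmin f <= f t.
Proof. by rewrite /fmin; case: pickP => [t0 _|/(_ t)//]; apply: bigmin_le. Qed.

Lemma le_fmin f c :
  (forall t, c <= f t) -> ((T -> False) -> c <= 0) -> c <= fmin f.
Proof.
move=> cf c0; rewrite /fmin; case: pickP => [t0 _|T0]; last by apply: c0 => t; have := T0 t.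
exact: le_bigmin.
Qed.

Lemma fmax_empty f : (T -> False) -> fmax f = 0.
Proof. by move=> T0; rewrite /fmax; case: pickP => [t0 _|//]; case: (T0 t0). Qed.

Lemma fmin_empty f : (T -> False) -> fmin f = 0.
Proof. by move=> T0; rewrite /fmin; case: pickP => [t0 _|//]; case: (T0 t0). Qed.

Lemma fmax_leD f g c : 0 <= c -> (forall t, f t <= g t + c) -> fmax f <= fmax g + c.
Proof.
move=> c0 fg; apply: fmax_le => [t|T0]; last by rewrite fmax_empty // add0r.
by rewrite (le_trans (fg t)) // lerD2r le_fmax.
Qed.

Lemma fmin_leD f g c : 0 <= c -> (forall t, f t <= g t + c) -> fmin f <= fmin g + c.
Proof.
move=> c0 fg; rewrite -lerBlDr; apply: le_fmin => [t|T0].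
  by rewrite lerBlDr (le_trans (fmin_le f t)).
by rewrite fmin_empty // sub0r oppr_le0.
Qed.

Lemma le_fmin_fmin f g : (forall t, f t <= g t) -> fmin f <= fmin g.
Proof. by move=> fg; rewrite -[fmin g]addr0; apply: fmin_leD => // t; rewrite addr0. Qed.

Lemma fmax_ge0 f : (forall t, 0 <= f t) -> 0 <= fmax f.
Proof.
move=> f0; case: (pickP (@predT T)) => [t _|T0]; first exact: le_trans (f0 t) (le_fmax f t).
by rewrite fmax_empty // => t; have := T0 t.
Qed.

Lemma normr_le_supnorm f t : `|f t| <= supnorm f.
Proof. exact: (le_fmax (fun t => `|f t|)). Qed.

Lemma supnorm_le f c : 0 <= c -> (forall t, `|f t| <= c) -> supnorm f <= c.
Proof. by move=> c0 fc; apply: fmax_le. Qed.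

Lemma supnorm_ge0 f : 0 <= supnorm f.
Proof. by apply: fmax_ge0 => t; apply: normr_ge0. Qed.

Lemma spnorm_le_supnormB f g : spnorm f <= spnorm g + 2 * supnorm (fun t => f t - g t).
Proof.
set d := supnorm _; have d0 : 0 <= d := supnorm_ge0 _.
have fg t : `|f t - g t| <= d by exact: (normr_le_supnorm (fun t => f t - g t)).
have hmax : fmax f <= fmax g + d.
  by apply: fmax_leD => // t; have := fg t; rewrite ler_norml; lra.
have hmin : fmin g <= fmin f + d.
  by apply: fmin_leD => // t; have := fg t; rewrite ler_norml; lra.
rewrite /spnorm; lra.
Qed.

End FiniteExtrema.

Section Clip.
Variables (R : realType) (S : finType) (M : R).
Hypothesis M_ge0 : 0 <= M.
Implicit Types (U W : S -> R) (c : R).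

Lemma clip_leD U W c : 0 <= c -> (forall s, U s <= W s + c) ->
  forall s, clip M U s <= clip M W s + c.
Proof.
move=> c0 UW s; rewrite /clip addr_minl le_min2 ?UW //.
by rewrite -addrA lerD2l fmin_leD.
Qed.

Lemma fmin_clip U : fmin (clip M U) = fmin U.
Proof.
apply/le_anti/andP; split; first by apply: le_fmin_fmin => s; rewrite /clip ge_min lexx.
apply: le_fmin => [s|S0]; last by rewrite fmin_empty.
by rewrite /clip le_min fmin_le lerDr M_ge0.
Qed.

Lemma spnorm_clip U : spnorm (clip M U) <= M.
Proof.
rewrite /spnorm fmin_clip lerBlDr; apply: fmax_le => [s|S0].
  by rewrite /clip ge_min addrC lexx orbT.
by rewrite fmin_empty // addr0.
Qed.

Lemma le_clip U W : spnorm U <= M -> (forall s, U s <= W s) ->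
  forall s, U s <= clip M W s.
Proof.
move=> spU UW s; rewrite /clip le_min UW /=.
have := le_fmax U s; have := le_fmin_fmin UW; move: spU; rewrite /spnorm; lra.
Qed.

End Clip.

Lemma is_cvgn_discounted_sum (R : realType) (gamma K : R) (g : nat -> R) :
  0 <= gamma -> gamma < 1 -> (forall t, `|g t| <= K) ->
  cvgn (fun n => \sum_(t < n) gamma ^+ t * g t).
Proof.
move=> g0 g1 gK; have -> : (fun n => \sum_(t < n) gamma ^+ t * g t) =
    series (fun t => gamma ^+ t * g t).
  by apply/funext => n; rewrite /series /= big_mkord.
apply: normed_cvg; apply: (@series_le_cvg _ _ (geometric K gamma)) => //.
- by move=> n; apply: normr_ge0.
- by move=> n; rewrite /geometric /= mulr_ge0 ?exprn_ge0 // (le_trans _ (gK 0%N)).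
- by move=> n; rewrite /geometric /= normrM ger0_norm ?exprn_ge0 // mulrC ler_wpM2r ?exprn_ge0.
- by apply: is_cvg_geometric_series; rewrite ger0_norm.
Qed.

Section Kernel.
Variables (R : realType) (S A : finType) (P : S -> A -> S -> R).
Hypotheses (P_ge0 : forall s a s', 0 <= P s a s')
           (P_sum1 : forall s a, \sum_(s' : S) P s a s' = 1).
Implicit Types (U W : S -> R) (c : R).

Lemma PV_le U W s a : (forall s', U s' <= W s') -> PV P U s a <= PV P W s a.
Proof. by move=> UW; apply: ler_sum => s' _; apply: ler_wpM2l. Qed.

Lemma PV_cst c s a : PV P (fun _ => c) s a = c.
Proof. by rewrite /PV -mulr_suml P_sum1 mul1r. Qed.

Lemma PVD U W s a : PV P (fun s' => U s' + W s') s a = PV P U s a + PV P W s a.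
Proof. by rewrite /PV -big_split; apply: eq_bigr => s' _; rewrite mulrDr. Qed.

Lemma PVB U W s a : PV P (fun s' => U s' - W s') s a = PV P U s a - PV P W s a.
Proof. by rewrite /PV -sumrB; apply: eq_bigr => s' _; rewrite mulrBr. Qed.

Lemma PV_leD U W c s a : (forall s', U s' <= W s' + c) -> PV P U s a <= PV P W s a + c.
Proof. by move=> UW; rewrite -[c](PV_cst c s a) -PVD; apply: PV_le. Qed.

Lemma normr_PV_le U c s a : (forall s', `|U s'| <= c) -> `|PV P U s a| <= c.
Proof.
move=> Uc; have [Uge Ule] : (forall s', - c <= U s') /\ forall s', U s' <= c.
  by split=> s'; have := Uc s'; rewrite ler_norml => /andP[].
rewrite ler_norml -{1}(PV_cst (- c) s a) -{2}(PV_cst c s a).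
by rewrite !PV_le.
Qed.

Section Operators.
Variables (r : S -> A -> R) (gamma M : R).
Hypothesis gamma_ge0 : 0 <= gamma.
Local Notation L := (Lop P r gamma M).

Lemma bellman_leD U W c : 0 <= c -> (forall s, U s <= W s + c) ->
  forall s, bellman P r gamma U s <= bellman P r gamma W s + gamma * c.
Proof.
move=> c0 UW s; apply: fmax_leD => [|a]; first exact: mulr_ge0.
by rewrite -addrA lerD2l -mulrDr ler_wpM2l // PV_leD.
Qed.

Lemma Lop_leD U W c : 0 <= c -> (forall s, U s <= W s + c) ->
  forall s, L U s <= L W s + gamma * c.
Proof. by move=> c0 UW; apply: clip_leD; rewrite ?mulr_ge0 //; apply: bellman_leD. Qed.

Lemma Lop_le U W : (forall s, U s <= W s) -> forall s, L U s <= L W s.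
Proof.
move=> UW s; rewrite -[L W s]addr0 -(mulr0 gamma).
by apply: Lop_leD => // s'; rewrite addr0.
Qed.

Lemma supnorm_LopB U W :
  supnorm (fun s => L U s - L W s) <= gamma * supnorm (fun s => U s - W s).
Proof.
set c := supnorm (fun s => U s - W s); have c0 : 0 <= c := supnorm_ge0 _.
have [UW WU] : (forall s, U s <= W s + c) /\ (forall s, W s <= U s + c).
  split=> s; have := normr_le_supnorm (fun s => U s - W s) s; rewrite -/c ler_norml /=; lra.
apply: supnorm_le => [|s]; first exact: mulr_ge0.
have := Lop_leD c0 UW s; have := Lop_leD c0 WU s; rewrite ler_norml; lra.
Qed.

End Operators.

Lemma PV_sum n (c : nat -> R) (U : nat -> S -> R) s a :
  PV P (fun s' => \sum_(t < n) c t * U t s') s a = \sum_(t < n) c t * PV P (U t) s a.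
Proof.
rewrite /PV; under eq_bigr do rewrite mulr_sumr.
rewrite exchange_big; apply: eq_bigr => t _; rewrite mulr_sumr.
by apply: eq_bigr => s' _; rewrite mulrCA.
Qed.

Section Policy.
Variables (pi : S -> A -> R) (gamma : R).
Hypotheses (pi_policy : is_policy pi) (gamma_ge0 : 0 <= gamma) (gamma_lt1 : gamma < 1).

Lemma Ppi_sum n (c : nat -> R) (U : nat -> S -> R) s :
  Ppi P pi (fun s' => \sum_(t < n) c t * U t s') s = \sum_(t < n) c t * Ppi P pi (U t) s.
Proof.
rewrite /Ppi; under eq_bigr do rewrite PV_sum mulr_sumr.
rewrite exchange_big; apply: eq_bigr => t _; rewrite mulr_sumr.
by apply: eq_bigr => a _; rewrite mulrCA.
Qed.

Lemma normr_Ppi_le U c s : (forall s', `|U s'| <= c) -> `|Ppi P pi U s| <= c.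
Proof.
case: pi_policy => pi_ge0 pi_sum1 Uc; rewrite /Ppi (le_trans (ler_norm_sum _ _ _)) //.
rewrite -[c]mul1r -(pi_sum1 s) mulr_suml; apply: ler_sum => a _.
by rewrite normrM ger0_norm // ler_wpM2l // normr_PV_le.
Qed.

Lemma cvg_Ppi (U : nat -> S -> R) (l : S -> R) s :
  (forall s', U n s' @[n --> \oo] --> l s') -> Ppi P pi (U n) s @[n --> \oo] --> Ppi P pi l s.
Proof.
move=> Ul; apply: cvg_big => [|a _]; first exact: add_continuous.
apply: cvgMl_tmp; apply: cvg_big => [|s' _]; first exact: add_continuous.
exact: cvgMl_tmp.
Qed.

Lemma value_eq r' s :
  value P pi gamma r' s = rpi pi r' s + gamma * Ppi P pi (value P pi gamma r') s.
Proof.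
pose g t := iter t (Ppi P pi) (rpi pi r').
pose u n s := \sum_(t < n) gamma ^+ t * g t s.
have g_bounded t s' : `|g t s'| <= supnorm (rpi pi r').
  elim: t s' => [|t IH] s'; first exact: normr_le_supnorm.
  exact: normr_Ppi_le.
have u_cvg s' : cvgn (u ^~ s') := is_cvgn_discounted_sum gamma_ge0 gamma_lt1 (g_bounded ^~ s').
have uS n s' : u n.+1 s' = rpi pi r' s' + gamma * Ppi P pi (u n) s'.
  rewrite /u big_ord_recl expr0 mul1r Ppi_sum mulr_sumr; congr (_ + _).
  by apply: eq_bigr => t _; rewrite exprS mulrA.
have lim_uS : u n.+1 s @[n --> \oo] --> value P pi gamma r' s.
  by rewrite (cvg_shiftS (u ^~ s)); exact: u_cvg.
have lim_uS' : u n.+1 s @[n --> \oo] -->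
    rpi pi r' s + gamma * Ppi P pi (value P pi gamma r') s.
  have -> : (fun n => u n.+1 s) = fun n => rpi pi r' s + gamma * Ppi P pi (u n) s.
    by apply/funext => n; rewrite uS.
  by apply: cvgD; [exact: cvg_cst | apply: cvgMl_tmp; apply: cvg_Ppi].
exact: cvg_unique _ lim_uS lim_uS'.
Qed.

Lemma value_le_bellman r r' s : (forall s a, r' s a <= r s a) ->
  value P pi gamma r' s <= bellman P r gamma (value P pi gamma r') s.
Proof.
case: pi_policy => pi_ge0 pi_sum1 r'r; rewrite {1}value_eq.
set U := value P pi gamma r'; rewrite /rpi /Ppi mulr_sumr -big_split /=.
rewrite -[bellman _ _ _ _ _]mul1r -(pi_sum1 s) mulr_suml; apply: ler_sum => a _.
rewrite mulrCA -mulrDr ler_wpM2l // (le_trans _ (le_fmax _ a)) //.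
by rewrite lerD2r.
Qed.

End Policy.

Section Deterministic.
Variables (f : S -> A) (gamma : R).
Hypotheses (gamma_ge0 : 0 <= gamma) (gamma_lt1 : gamma < 1).
Local Notation vdet rho := (value P (@det_policy R S A f) gamma rho).

Lemma det_policy_sum (F : A -> R) s : \sum_(a : A) @det_policy R S A f s a * F a = F (f s).
Proof.
rewrite (bigD1 (f s)) //= /det_policy eqxx mul1r big1 ?addr0 // => a /negbTE ->.
by rewrite mul0r.
Qed.

Lemma det_policy_is_policy : is_policy (@det_policy R S A f).
Proof.
split=> [s a|s]; first by rewrite /det_policy ler0n.
by have := det_policy_sum (fun=> 1) s; under eq_bigr do rewrite mulr1.
Qed.

Lemma value_det_eq rho s : vdet rho s = rho s (f s) + gamma * PV P (vdet rho) s (f s).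
Proof.
rewrite (value_eq det_policy_is_policy gamma_ge0 gamma_lt1) /rpi /Ppi.
by rewrite (det_policy_sum (rho s)) (det_policy_sum (PV P _ s)).
Qed.

Lemma ge0_of_discounted_supersolution D :
  (forall s, gamma * PV P D s (f s) <= D s) -> forall s, 0 <= D s.
Proof.
move=> superD s; set d := fmin D.
have d_contr : gamma * d <= d.
  apply: le_fmin => [s'|/(_ s)//]; rewrite (le_trans _ (superD s')) // ler_wpM2l //.
  by rewrite -[d](PV_cst d s' (f s')) PV_le // => s''; apply: fmin_le.
have d_ge0 : 0 <= d.
  have : 0 < 1 - gamma by rewrite subr_gt0.
  nra.
exact: le_trans d_ge0 (fmin_le D s).
Qed.

Lemma value_det_le rho1 rho2 : (forall s, rho1 s (f s) <= rho2 s (f s)) ->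
  forall s, vdet rho1 s <= vdet rho2 s.
Proof.
move=> rho12 s; rewrite -subr_ge0.
apply: (@ge0_of_discounted_supersolution (fun s => vdet rho2 s - vdet rho1 s)) => s'.
rewrite PVB [vdet rho2 s']value_det_eq [vdet rho1 s']value_det_eq.
by have := rho12 s'; lra.
Qed.

Lemma supnorm_value_detB V rho delta : 0 <= delta ->
  (forall s, `|rho s (f s) + gamma * PV P V s (f s) - V s| <= delta) ->
  supnorm (fun s => vdet rho s - V s) <= delta / (1 - gamma).
Proof.
move=> delta0 res; set d := supnorm _; have d0 : 0 <= d := supnorm_ge0 _.
have d_le : d <= delta + gamma * d.
  apply: supnorm_le => [|s]; first by rewrite addr_ge0 ?mulr_ge0.
  rewrite value_det_eq.
  have -> : rho s (f s) + gamma * PV P (vdet rho) s (f s) - V s =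
      rho s (f s) + gamma * PV P V s (f s) - V s +
      gamma * PV P (fun s => vdet rho s - V s) s (f s) by rewrite PVB; ring.
  rewrite (le_trans (ler_normD _ _)) // lerD // normrM ger0_norm // ler_wpM2l //.
  exact: normr_PV_le (normr_le_supnorm (fun s => vdet rho s - V s)).
by rewrite ler_pdivlMr ?subr_gt0 //; lra.
Qed.

End Deterministic.
End Kernel.

Lemma le0_of_le_geometric (R : realType) (gamma d K : R) :
  0 <= gamma -> gamma < 1 -> (forall n, d <= K * gamma ^+ n) -> d <= 0.
Proof.
move=> g0 g1 dK; have Kg : K * gamma ^+ n @[n --> \oo] --> K * 0.
  by apply: cvgMl_tmp; apply: cvg_expr; rewrite ger0_norm.
have := @limr_ge _ _ _ _ d _ (cvgP _ Kg) (nearW _ dK).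
by rewrite (cvg_lim _ Kg) ?mulr0 //; apply; exact: _.
Qed.

Section ValueIteration.
Variables (R : realType) (S A : finType) (P : S -> A -> S -> R) (r : S -> A -> R) (gamma M : R).
Hypotheses (P_ge0 : forall s a s', 0 <= P s a s')
           (P_sum1 : forall s a, \sum_(s' : S) P s a s' = 1)
           (r_ge0 : forall s a, 0 <= r s a) (r_le1 : forall s a, r s a <= 1)
           (gamma_ge0 : 0 <= gamma) (gamma_lt1 : gamma < 1) (M_ge0 : 0 <= M).
Local Notation L := (Lop P r gamma M).
Local Notation B := (1 - gamma)^-1.

Lemma horizon_ge1 : 1 <= B.
Proof. by rewrite invf_ge1 ?subr_gt0 // gerBl. Qed.

Lemma horizon_ge0 : 0 <= B.
Proof. exact: le_trans ler01 horizon_ge1. Qed.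

Definition value_iter n : S -> R := iter n L (fun=> 0).
Definition vstar : S -> R := fun s => limn (value_iter ^~ s).

Lemma Lop_ge0 U : (forall s, 0 <= U s) -> forall s, 0 <= L U s.
Proof.
have bellman_ge0 V : (forall s, 0 <= V s) -> forall s, 0 <= bellman P r gamma V s.
  move=> V0 s; apply: fmax_ge0 => a; rewrite addr_ge0 ?mulr_ge0 //.
  by rewrite -(PV_cst P_sum1 0 s a) PV_le.
move=> U0 s; rewrite /Lop /clip le_min bellman_ge0 //= addr_ge0 //.
by apply: le_fmin => // s'; apply: bellman_ge0.
Qed.

Lemma Lop_le_horizon U : (forall s, U s <= B) -> forall s, L U s <= B.
Proof.
have bellmanB : 1 + gamma * B = B by field; rewrite subr_eq0 gt_eqF.
move=> UB s; rewrite /Lop /clip ge_min; apply/orP; left.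
apply: fmax_le => [a|_]; last exact: horizon_ge0.
rewrite -bellmanB lerD // ler_wpM2l //.
by rewrite -(PV_cst P_sum1 B s a) PV_le.
Qed.

Lemma value_iter_ge0 n s : 0 <= value_iter n s.
Proof. by elim: n s => [//|n IH] s; apply: Lop_ge0. Qed.

Lemma value_iter_le_horizon n s : value_iter n s <= B.
Proof.
by elim: n s => [|n IH] s; [apply: horizon_ge0 | apply: Lop_le_horizon].
Qed.

Lemma value_iter_leS n s : value_iter n s <= value_iter n.+1 s.
Proof.
elim: n s => [|n IH] s; first exact: value_iter_ge0.
by apply: Lop_le.
Qed.

Lemma value_iter_nondecreasing s : nondecreasing_seq (value_iter ^~ s).
Proof. by apply/nondecreasing_seqP => n; apply: value_iter_leS. Qed.

Lemma cvgn_value_iter s : cvgn (value_iter ^~ s).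
Proof.
apply: nondecreasing_is_cvgn; first exact: value_iter_nondecreasing.
by exists B => _ [n _ <-]; apply: value_iter_le_horizon.
Qed.

Lemma value_iter_le_vstar n s : value_iter n s <= vstar s.
Proof.
by apply: (nondecreasing_cvgn_le (value_iter_nondecreasing s)); apply: cvgn_value_iter.
Qed.

Lemma vstar_le_Lop s : vstar s <= L vstar s.
Proof.
apply: limr_le; first exact: cvgn_value_iter.
apply: nearW => n; apply: le_trans (value_iter_leS n s) _.
by apply: Lop_le => // s'; apply: value_iter_le_vstar.
Qed.

Lemma le_vstar U : (forall s, U s <= L U s) -> forall s, U s <= vstar s.
Proof.
move=> UL s; have U_iter n s' : U s' <= value_iter n s' + gamma ^+ n * supnorm U.
  elim: n s' => [|n IH] s'.
    by rewrite expr0 mul1r add0r (le_trans (ler_norm _)) ?normr_le_supnorm.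
  rewrite (le_trans (UL s')) // exprS -mulrA; apply: Lop_leD => //.
  by rewrite mulr_ge0 ?exprn_ge0 ?supnorm_ge0.
rewrite -subr_le0; apply: (le0_of_le_geometric (K := supnorm U) gamma_ge0 gamma_lt1) => n.
by have := U_iter n s; have := value_iter_le_vstar n s; lra.
Qed.

Lemma Lop_vstar : L vstar = vstar.
Proof.
apply/funext => s; apply/le_anti; rewrite vstar_le_Lop andbT.
by apply: le_vstar => s'; apply: Lop_le => //; apply: vstar_le_Lop.
Qed.

Lemma vstar_le_value_iter n s : vstar s <= value_iter n s + gamma ^+ n * B.
Proof.
elim: n s => [|n IH] s.
  rewrite expr0 mul1r add0r; apply: limr_le; first exact: cvgn_value_iter.
  by apply: nearW => n; apply: value_iter_le_horizon.
rewrite -Lop_vstar exprS -mulrA; apply: Lop_leD => //.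
by rewrite mulr_ge0 ?exprn_ge0 ?horizon_ge0.
Qed.

Lemma normr_value_iterB_vstar n s : `|value_iter n s - vstar s| <= gamma ^+ n * B.
Proof.
rewrite distrC ler_norml; have := value_iter_le_vstar n s.
have := vstar_le_value_iter n s; have : 0 <= gamma ^+ n * B.
  by rewrite mulr_ge0 ?exprn_ge0 ?horizon_ge0.
lra.
Qed.

Lemma Lop_fixpoint_unique W : L W = W -> W = vstar.
Proof.
move=> LW; set d := supnorm (fun s => W s - vstar s).
have d_contr : d <= gamma * d.
  have : supnorm (fun s => L W s - L vstar s) <= gamma * d by apply: supnorm_LopB.
  by rewrite LW Lop_vstar.
have d_le0 : d <= 0.
  have : d * (1 - gamma) <= 0 by rewrite mulrBr mulr1 subr_le0 mulrC.
  by rewrite pmulr_lle0 // subr_gt0.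
apply/funext => s; apply/eqP; rewrite -subr_eq0 -normr_le0.
exact: le_trans (normr_le_supnorm (fun s => W s - vstar s) s) d_le0.
Qed.

Lemma spnorm_vstar : spnorm vstar <= M.
Proof. by rewrite -Lop_vstar; apply: spnorm_clip. Qed.

Definition clipped_reward (V : S -> R) (s : S) (a : A) : R :=
  Num.min (fmin V + M - gamma * PV P V s a) (r s a).

Lemma clipped_reward_le V s a : clipped_reward V s a <= r s a.
Proof. by rewrite /clipped_reward ge_min lexx orbT. Qed.

(* Against a greedy action, clipping the reward at fmin V + M - gamma P V
   reproduces the clipping of the Bellman update at fmin V + M. *)
Lemma clipped_residual V e (f : S -> A) : 0 <= e ->
  (forall s, V s <= L V s <= V s + e) ->
  (forall s a, r s a + gamma * PV P V s a <= r s (f s) + gamma * PV P V s (f s)) ->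
  forall s, `|clipped_reward V s (f s) + gamma * PV P V s (f s) - V s| <= e.
Proof.
move=> e0 LV greedy s.
have bellman_greedy : bellman P r gamma V s = r s (f s) + gamma * PV P V s (f s).
  apply/le_anti/andP; split; first by apply: fmax_le => // /(_ (f s)).
  exact: (le_fmax (fun a => r s a + gamma * PV P V s a)).
have step : clipped_reward V s (f s) + gamma * PV P V s (f s) =
    Num.min (fmin V + M) (bellman P r gamma V s).
  by rewrite /clipped_reward addr_minl subrK bellman_greedy.
have LVs : L V s = Num.min (bellman P r gamma V s) (M + fmin (L V)).
  by rewrite /Lop fmin_clip.
have [fmin_lo fmin_hi] : fmin V <= fmin (L V) /\ fmin (L V) <= fmin V + e.
  split; first by apply: le_fmin_fmin => s'; case/andP: (LV s').
  by apply: fmin_leD => // s'; case/andP: (LV s').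
have step_le : Num.min (fmin V + M) (bellman P r gamma V s) <= L V s.
  by rewrite LVs [X in X <= _]minC; apply: le_min2; lra.
have le_step : L V s <= Num.min (fmin V + M) (bellman P r gamma V s) + e.
  by rewrite LVs addr_minl [X in _ <= X]minC; apply: le_min2; [rewrite lerDl | lra].
rewrite step ler_norml; case/andP: (LV s); lra.
Qed.

Lemma supnorm_greedy_clipped_valueB n (f : S -> A) :
  (forall s a, r s a + gamma * PV P (value_iter n) s a <=
               r s (f s) + gamma * PV P (value_iter n) s (f s)) ->
  supnorm (fun s => value P (@det_policy R S A f) gamma (clipped_reward (value_iter n)) s
                    - vstar s) <= 2 * (gamma ^+ n * B ^+ 2).
Proof.
move=> greedy; set V := value_iter n; set e := gamma ^+ n * B.
have e0 : 0 <= e by rewrite mulr_ge0 ?exprn_ge0 ?horizon_ge0.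
have LV s : V s <= L V s <= V s + e.
  rewrite value_iter_leS /= (le_trans (value_iter_le_vstar n.+1 s)) //.
  exact: vstar_le_value_iter.
have := supnorm_value_detB P_ge0 P_sum1 gamma_ge0 gamma_lt1 e0 (clipped_residual e0 LV greedy).
set Vhat := value _ _ _ _ => Vhat_V.
apply: supnorm_le => [|s]; first by rewrite !mulr_ge0 ?exprn_ge0 ?horizon_ge0.
have := le_trans (normr_le_supnorm (fun s => Vhat s - V s) s) Vhat_V.
have := normr_value_iterB_vstar n s; rewrite -/V -/e !ler_norml.
have : e <= e * B by rewrite ler_peMr ?horizon_ge1.
have -> : 2 * (gamma ^+ n * B ^+ 2) = 2 * (e * B) by rewrite /e expr2 !mulrA.
lra.
Qed.

Lemma value_iter_greedy_error n (f : S -> A) eps :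
  3 * (gamma ^+ n * B ^+ 2) <= eps ->
  (forall s a, r s a + gamma * PV P (value_iter n) s a <=
               r s (f s) + gamma * PV P (value_iter n) s (f s)) ->
  supnorm (fun s => value_iter n s - vstar s) <= eps /\
  supnorm (fun s => value P (@det_policy R S A f) gamma (clipped_reward (value_iter n)) s
                    - vstar s) <= eps.
Proof.
move=> err greedy.
have e_le : gamma ^+ n * B <= gamma ^+ n * B ^+ 2.
  by rewrite expr2 mulrA ler_peMr ?mulr_ge0 ?exprn_ge0 ?horizon_ge0 ?horizon_ge1.
have e0 : 0 <= gamma ^+ n * B ^+ 2 by rewrite mulr_ge0 ?exprn_ge0 ?horizon_ge0.
split; last by apply: le_trans (supnorm_greedy_clipped_valueB greedy) _; lra.
apply: supnorm_le => [|s]; first lra.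
by apply: le_trans (normr_value_iterB_vstar n s) _; lra.
Qed.

End ValueIteration.

Lemma niter_ge (R : realType) (gamma eps : R) : 0 < gamma -> gamma < 1 -> 0 < eps ->
  ln (3 / ((1 - gamma) ^+ 2 * eps)) <= (niter gamma eps)%:R * (1 - gamma).
Proof.
move=> g0 g1 e0; have g1' : 0 < 1 - gamma by rewrite subr_gt0.
rewrite /niter; set y := ln _ / _; have y_ceil := ceil_ge y.
case: ifP => [c0|/negbT]; first by rewrite natr_absz ger0_norm // -ler_pdivrMr.
rewrite -ltNge => c_lt0; have : y < 0 by apply: le_lt_trans y_ceil _; rewrite ltrz0.
by rewrite /y pmulr_llt0 ?invr_gt0 // mul0r => /ltW.
Qed.

Lemma niter_bound (R : realType) (gamma eps : R) : 0 < gamma -> gamma < 1 -> 0 < eps ->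
  3 * (gamma ^+ niter gamma eps * (1 - gamma)^-1 ^+ 2) <= eps.
Proof.
move=> g0 g1 e0; have g1' : 0 < 1 - gamma by rewrite subr_gt0.
set T := niter gamma eps; set x := 3 / ((1 - gamma) ^+ 2 * eps).
have x0 : 0 < x by rewrite divr_gt0 // mulr_gt0 // exprn_gt0.
have hT : ln x <= T%:R * (1 - gamma) := niter_ge g0 g1 e0.
have ln_gamma : ln gamma <= gamma - 1.
  by have := @le_ln1Dx R (gamma - 1); rewrite [1 + _]addrC subrK; apply; lra.
have : ln (gamma ^+ T) <= ln x^-1.
  rewrite lnXn // lnV ?posrE // -mulr_natl.
  have := ler_wpM2l (ler0n R T) ln_gamma; move: hT; rewrite !mulrBr !mulr1; lra.
rewrite ler_ln ?posrE ?exprn_gt0 ?invr_gt0 // /x invf_div ler_pdivlMr // => h.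
by rewrite exprVn mulrA ler_pdivrMr ?exprn_gt0 // mulrC [eps * _]mulrC.
Qed.

Unset Implicit Arguments.

Theorem lemma3 (R : realType) (S A : finType)
  (P : S -> A -> S -> R) (r : S -> A -> R) (gamma M eps : R)
  (HP0 : forall s a s', 0 <= P s a s')
  (HP1 : forall s a, \sum_(s' : S) P s a s' = 1)
  (Hr : forall s a, 0 <= r s a <= 1)
  (Hg : 0 < gamma < 1) (HM : 0 < M) (Heps : 0 < eps)
  (pihat : S -> A)
  (Hpihat : forall s a,
     r s a + gamma * PV P (VT P r gamma M eps) s a
       <= r s (pihat s) + gamma * PV P (VT P r gamma M eps) s (pihat s)) :
  let L := Lop P r gamma M in
  let V := VT P r gamma M eps in
  let m := fmin V in
  let rt := fun s a => Num.min (m + M - gamma * PV P V s a) (r s a) in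
  let Vhat := value P (@det_policy R S A pihat) gamma rt in
  (forall U W : S -> R,
     supnorm (fun s => L U s - L W s) <= gamma * supnorm (fun s => U s - W s)) /\
  exists Vstar : S -> R,
    L Vstar = Vstar /\ (forall W, L W = W -> W = Vstar) /\
    (* 1 *)
    supnorm (fun s => V s - Vstar s) <= eps /\
    (* 2 *)
    (forall s a, rt s a <= r s a) /\
    supnorm (fun s => Vhat s - Vstar s) <= eps /\
    spnorm Vhat <= M + 2 * eps /\
    (* 3 (parts not depending on pi', r') *)
    (forall s, Vhat s <= value P (@det_policy R S A pihat) gamma r s /\
               Vstar s - eps <= Vhat s) /\
    (* 3 *)
    (forall (pi' : S -> A -> R) (r' : S -> A -> R),
       is_policy pi' -> (forall s a, r' s a <= r s a) ->
       spnorm (value P pi' gamma r') <= M ->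
       (forall s, value P pi' gamma r' s <= Vstar s) /\
       (forall s,
          Vhat s <= value P (@det_policy R S A pihat) gamma r s /\
          Vstar s - eps <= Vhat s /\
          value P pi' gamma r' s - eps <= Vstar s - eps)).
Proof.
move=> L V m rt Vhat.
case/andP: Hg => g0 g1; have g0' := ltW g0; have M0 := ltW HM.
have r0 s a : 0 <= r s a by case/andP: (Hr s a).
have r1 s a : r s a <= 1 by case/andP: (Hr s a).
pose vs := vstar P r gamma M.
have [errV errVhat] : supnorm (fun s => V s - vs s) <= eps /\
                      supnorm (fun s => Vhat s - vs s) <= eps :=
  value_iter_greedy_error HP0 HP1 r0 r1 g0' g1 M0 (niter_bound g0 g1 Heps) Hpihat.
have Vhat_ge s : vs s - eps <= Vhat s.
  by have := le_trans (normr_le_supnorm _ s) errVhat; rewrite ler_norml /=; lra.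
have Vhat_le s : Vhat s <= value P (@det_policy R S A pihat) gamma r s.
  by apply: value_det_le => // s'; apply: clipped_reward_le.
split; first exact: supnorm_LopB.
exists vs; split; first exact: Lop_vstar.
split; first exact: Lop_fixpoint_unique.
split=> //; split; first exact: clipped_reward_le.
split=> //.
split.
  apply: le_trans (spnorm_le_supnormB Vhat vs) _.
  by rewrite lerD ?spnorm_vstar ?ler_wpM2l.
split; first by move=> s; split.
move=> pi' r' pi'_policy r'_le span_le.
have U_le s : value P pi' gamma r' s <= vs s.
  by apply: le_vstar => // s'; apply: le_clip => // s''; apply: value_le_bellman.
by split=> // s; rewrite lerD2r U_le.
Qed.
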